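(* Let $n$ be a positive integer and $p$ an odd prime. If $n$ is divisible by $4$, then the lists \[ \binom{n}{0}, \binom{n}{2}, \ldots, \binom{n}{n/2-2} \quad\text{and}\quad \binom{n}{1}, \binom{n}{3}, \ldots, \binom{n}{n/2-1} \] have the same number of elements divisible by $p$. If $n \equiv 2 \bmod 4$, then the lists \[ \binom{n}{0}, \binom{n}{2}, \ldots, \binom{n}{n/2-1} \quad\text{and}\quad \binom{n}{1}, \binom{n}{3}, \ldots, \binom{n}{n/2-2}, \binom{n}{n/2} \] have the same number of elements divisible by $p$. *)

From mathcomp Require Import all_boot.
Set Implicit Arguments. Unset Strict Implicit. Unset Printing Implicit Defensive.

Definition cnt_div (p n m : nat) (par : bool) : nat :=
  count (fun k => (odd k == par) && (p %| 'C(n, k))) (iota 0 m.+1).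

From mathcomp Require Import all_boot all_algebra zify.
Set Implicit Arguments. Unset Strict Implicit. Unset Printing Implicit Defensive.
Import GRing.Theory.
Local Open Scope ring_scope.

(* By Lucas' theorem, for [b, d < p] the prime [p] does not divide
   [C(a p + b, c p + d)] iff it does not divide [C(a, c)] and [d <= b]; as [p]
   is odd, [(-1)^(c p + d) = (-1)^c (-1)^d].  Hence the alternating count
   [sum_k (-1)^k [p does not divide C(n, k)]] is multiplicative over the
   base-[p] digits of [n], a digit [b] contributing [sum_(d <= b) (-1)^d],
   i.e. [1] if [b] is even and [0] otherwise.  The indicator of "[n] is even and
   [p] does not divide [C(n, n/2)]" obeys the same digit recursion, so the two
   agree.  For [n = 2N], the symmetry [C(n, k) = C(n, n - k)] folds the
   alternating count of the multiples of [p] in row [n] onto [k < N], where it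
   is the difference of the two counts of the statement, up to the central
   term. *)

Lemma coef_Xadd1_exp (R : nzRingType) n k :
  (('X + 1) ^+ n : {poly R})`_k = ('C(n, k))%:R.
Proof.
elim: n k => [|n IHn] [|k]; rewrite ?expr0 ?coef1 ?bin0 //.
  by rewrite exprSr mulrDr mulr1 coefD coefMX IHn bin0 add0r.
by rewrite exprSr mulrDr mulr1 coefD coefMX !IHn binS natrD addrC.
Qed.

Lemma sum_signr_nat (R : pzRingType) n :
  \sum_(0 <= k < n.+1) (-1) ^+ k = (~~ odd n)%:R :> R.
Proof.
elim: n => [|n IHn]; first by rewrite big_nat1.
by rewrite big_nat_recr //= IHn -signr_odd /=; case: (odd n); rewrite ?subrr ?add0r.
Qed.

Lemma sum_signr_leq (R : pzRingType) b m : (b < m)%N ->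
  \sum_(0 <= k < m) (-1) ^+ k *+ (k <= b)%N = (~~ odd b)%:R :> R.
Proof.
move=> lt_bm; rewrite (big_cat_nat _ (n := b.+1)) //= [X in _ + X]big1_seq ?addr0.
  by rewrite -(sum_signr_nat _ b); apply: eq_big_nat => k /andP[_]; rewrite ltnS => ->.
by move=> k /andP[_]; rewrite mem_index_iota => /andP[/ltn_geF->].
Qed.

Lemma big_nat_double_sym (V : nmodType) (F : nat -> V) N :
  (forall k, (k <= N.*2)%N -> F (N.*2 - k)%N = F k) ->
  \sum_(0 <= k < (N.*2).+1) F k = (\sum_(0 <= k < N) F k) *+ 2 + F N.
Proof.
move=> F_sym; rewrite (big_cat_nat _ (n := N.+1)) //=; last by lia.
have -> : \sum_(N.+1 <= k < (N.*2).+1) F k = \sum_(0 <= k < N) F k.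
  rewrite -[N.+1]add0n big_addn big_nat_rev (_ : _ - _ = N)%N; last by lia.
  apply: eq_big_nat => k /andP[_ lt_kN]; rewrite -F_sym; last by lia.
  by congr F; lia.
by rewrite big_nat_recr //= mulr2n addrAC.
Qed.

Lemma prime_ndvd_fact p b : prime p -> (b < p)%N -> ~~ (p %| b`!)%N.
Proof.
move=> p_pr; elim: b => [|b IHb] lt_bp; first by rewrite dvdn1 gtn_eqF ?prime_gt1.
by rewrite factS Euclid_dvdM // negb_or gtnNdvd // IHb // ltnW.
Qed.

Lemma prime_dvd_bin_small p b d : prime p -> (b < p)%N ->
  (p %| 'C(b, d))%N = (b < d)%N.
Proof.
move=> p_pr lt_bp; case: ltnP => [/bin_small-> | le_db]; first by rewrite dvdn0.
apply/negbTE; apply: contra (prime_ndvd_fact p_pr lt_bp) => dvd_pC.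
by rewrite -(bin_fact le_db) dvdn_mulr.
Qed.

Section BinomialsModPrime.
Variable p : nat.
Hypothesis p_pr : prime p.

Lemma Xadd1_exp_Fp : ('X + 1) ^+ p = ('X^p + 1 : {poly 'F_p}).
Proof.
have pchar_p : p \in [pchar {poly 'F_p}] by rewrite pchar_poly pchar_Fp.
by rewrite exprDn_pchar ?expr1n ?pnatE.
Qed.

Lemma bin_lucas a b c d : (b < p)%N -> (d < p)%N ->
  ('C(a * p + b, c * p + d))%:R = ('C(a, c))%:R * ('C(b, d))%:R :> 'F_p.
Proof.
move=> lt_bp lt_dp; have p_gt0 := prime_gt0 p_pr.
have compXp : ('X^p + 1) ^+ a = ('X + 1) ^+ a \Po ('X^p : {poly 'F_p}).
  by rewrite rmorphXn /= rmorphD /= comp_polyX comp_polyC.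
rewrite -!coef_Xadd1_exp exprD mulnC exprM Xadd1_exp_Fp compXp coefM.
have lt_cp : (c * p < (c * p + d).+1)%N by rewrite ltnS leq_addr.
rewrite (bigD1 (Ordinal lt_cp)) //= big1 ?addr0.
  by rewrite coef_comp_poly_Xn // dvdn_mull // mulnK // addKn.
move=> [j lt_j]; rewrite -val_eqE /= => ne_j.
rewrite coef_comp_poly_Xn //; case: dvdnP => [[i def_j]|_]; last by rewrite mul0r.
rewrite [X in _ * X]coef_Xadd1_exp bin_small ?mulr0 //.
rewrite def_j in lt_j ne_j *.
have lt_ic : (i < c)%N.
  by rewrite ltn_neqAle -(eqn_pmul2r p_gt0) ne_j -ltnS -(ltn_pmul2r p_gt0); lia.
have : (i.+1 * p <= c * p)%N by rewrite leq_pmul2r.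
rewrite mulSn; lia.
Qed.

Lemma dvdn_bin_lucas a b c d : (b < p)%N -> (d < p)%N ->
  (p %| 'C(a * p + b, c * p + d))%N = (p %| 'C(a, c))%N || (b < d)%N.
Proof.
move=> lt_bp lt_dp; have pchar_p := pchar_Fp p_pr.
rewrite !(dvdn_pcharf pchar_p) bin_lucas // mulf_eq0 -!(dvdn_pcharf pchar_p).
by rewrite (prime_dvd_bin_small _ p_pr lt_bp).
Qed.

Hypothesis p_odd : odd p.

Definition alt_bin_ndvd n : int :=
  \sum_(0 <= k < n.+1) (-1) ^+ k *+ ~~ (p %| 'C(n, k))%N.

Definition central_bin_ndvd n : bool := ~~ odd n && ~~ (p %| 'C(n, n./2))%N.

Lemma alt_bin_ndvd_digit a b : (b < p)%N ->
  alt_bin_ndvd (a * p + b) = alt_bin_ndvd a *+ ~~ odd b.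
Proof.
move=> lt_bp; rewrite -mulr_natr /alt_bin_ndvd big_distrl /=.
transitivity (\sum_(0 <= k < a.+1 * p) ((-1) ^+ k *+ ~~ (p %| 'C(a * p + b, k))%N : int)).
  rewrite (big_cat_nat _ (n := (a * p + b).+1) (p := a.+1 * p)) //=; last by rewrite mulSn; lia.
  rewrite [X in _ = _ + X]big1_seq ?addr0 // => k /andP[_].
  by rewrite mem_index_iota => /andP[lt_nk _]; rewrite bin_small ?dvdn0.
rewrite big_nat_mul; apply: eq_bigr => c _.
rewrite mulSn -{1}[(c * p)%N]add0n big_addn addnK.
rewrite -(sum_signr_leq _ lt_bp) mulr_sumr; apply: eq_big_nat => d /andP[_ lt_dp].
rewrite addnC dvdn_bin_lucas // negb_or -leqNgt.
rewrite -signr_odd oddD oddM p_odd andbT signr_addb !signr_odd.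
by case: (p %| _)%N; rewrite /= ?mul0r ?mulrnAr.
Qed.

Lemma central_bin_ndvd_digit a b : (b < p)%N ->
  central_bin_ndvd (a * p + b) = central_bin_ndvd a && ~~ odd b.
Proof.
move=> lt_bp; rewrite /central_bin_ndvd oddD oddM p_odd andbT.
have := odd_double_half a; have := odd_double_half b; have := odd_double_half p.
rewrite p_odd; set a' := a./2; set b' := b./2; set p' := p./2 => def_p def_b def_a.
case: (odd a) (odd b) def_a def_b => [] [] /= def_a def_b; rewrite ?andbF ?andbT //.
- have -> : (a * p + b)./2 = (a' * p + (p' + b').+1)%N.
    by rewrite -[RHS]doubleK; congr half; nia.
  have lt_b : (b < (p' + b').+1)%N by lia.
  by rewrite dvdn_bin_lucas ?lt_b ?orbT //; lia.
- have -> : (a * p + b)./2 = (a' * p + b')%N.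
    by rewrite -[RHS]doubleK; congr half; nia.
  have ge_b : (b < b')%N = false by lia.
  by rewrite dvdn_bin_lucas ?ge_b ?orbF //; lia.
Qed.

Lemma alt_bin_ndvdE n : alt_bin_ndvd n = (central_bin_ndvd n)%:R.
Proof.
elim/ltn_ind: n => n IHn; have [-> | n_gt0] := posnP n.
  by rewrite /alt_bin_ndvd /central_bin_ndvd big_nat1 bin0 dvdn1 gtn_eqF ?prime_gt1.
have lt_np : (n %% p < p)%N by rewrite ltn_pmod ?prime_gt0.
rewrite (divn_eq n p) alt_bin_ndvd_digit // central_bin_ndvd_digit //.
by rewrite IHn ?ltn_Pdiv ?prime_gt1 //; case: (odd _); rewrite ?andbT ?andbF.
Qed.

Lemma alt_bin_dvd_double N :
  \sum_(0 <= k < (N.*2).+1) (-1) ^+ k *+ (p %| 'C(N.*2, k))%N = (p %| 'C(N.*2, N))%N%:R :> int.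
Proof.
have split_sign : \sum_(0 <= k < (N.*2).+1) (-1) ^+ k = alt_bin_ndvd N.*2 +
    \sum_(0 <= k < (N.*2).+1) (-1) ^+ k *+ (p %| 'C(N.*2, k))%N :> int.
  rewrite /alt_bin_ndvd -big_split; apply: eq_bigr => k _.
  by case: (p %| _)%N => /=; rewrite ?mulr0n ?addr0 ?add0r.
move: split_sign; rewrite sum_signr_nat alt_bin_ndvdE /central_bin_ndvd odd_double doubleK.
by case: (p %| _)%N => /=; lia.
Qed.

Lemma alt_bin_dvd_half N :
  \sum_(0 <= k < N) (-1) ^+ k *+ (p %| 'C(N.*2, k))%N =
  (odd N && (p %| 'C(N.*2, N))%N)%:R :> int.
Proof.
have := alt_bin_dvd_double N; rewrite big_nat_double_sym => [|k le_k]; last first.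
  by rewrite bin_sub // -signr_odd oddN ?odd_double // signr_odd.
rewrite -signr_odd; set S := \sum_(0 <= k < N) _.
case: (odd N) (p %| _)%N => [] [] /=; rewrite ?expr0 ?expr1 ?mulr1n ?mulr0n; lia.
Qed.

End BinomialsModPrime.

Lemma cnt_divS p n m par : cnt_div p n m.+1 par =
  (cnt_div p n m par + ((odd m.+1 == par) && (p %| 'C(n, m.+1))%N))%N.
Proof. by rewrite /cnt_div -[m.+2]addn1 iotaD count_cat /= addn0. Qed.

Lemma cnt_div_sub p n m : (cnt_div p n m false)%:Z - (cnt_div p n m true)%:Z =
  \sum_(0 <= k < m.+1) (-1) ^+ k *+ (p %| 'C(n, k))%N.
Proof.
elim: m => [|m IHm]; first by rewrite /cnt_div big_nat1 /=; case: (p %| _)%N.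
rewrite !cnt_divS big_nat_recr //= -IHm -signr_odd /=.
by case: (odd m) (p %| _)%N => [] [] /=; rewrite ?expr0 ?expr1; lia.
Qed.

Lemma cnt_div_sub_half p N : prime p -> odd p -> (0 < N)%N ->
  (cnt_div p N.*2 N.-1 false)%:Z - (cnt_div p N.*2 N.-1 true)%:Z =
  (odd N && (p %| 'C(N.*2, N))%N)%:R.
Proof. by move=> p_pr p_odd N_gt0; rewrite cnt_div_sub prednK ?alt_bin_dvd_half. Qed.

Local Close Scope ring_scope.

Theorem lemma1p2 (n p : nat) (Hn : 0 < n) (Hp : prime p) (Hodd : odd p) :
  (4 %| n ->
     cnt_div p n (n %/ 2 - 2) false = cnt_div p n (n %/ 2 - 1) true) /\
  (n %% 4 = 2 ->
     cnt_div p n (n %/ 2 - 1) false = cnt_div p n (n %/ 2) true).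
Proof.
rewrite divn2; split => [dvd4n | mod4n].
- have [M def_n even_M] : exists2 M, n = M.+2.*2 & ~~ odd M by exists (n./2 - 2); lia.
  have := cnt_div_sub_half Hp Hodd (ltn0Sn M.+1).
  rewrite def_n doubleK !subSS !subn0 (cnt_divS _ _ M false) /= (negbTE even_M) /=.
  lia.
- have [M def_n even_M] : exists2 M, n = M.+1.*2 & ~~ odd M by exists (n./2 - 1); lia.
  have := cnt_div_sub_half Hp Hodd (ltn0Sn M).
  rewrite def_n doubleK !subSS !subn0 (cnt_divS _ _ M true) /= (negbTE even_M) /=.
  lia.
Qed.
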